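(* Let $p$ be an odd prime and $\lambda$ a nonempty BG-partition. Then $a^*_\lambda$ is even if and only if $p\mid a^*_\lambda$.
   Context: Partitions: $\lambda=(\lambda_1\ge\lambda_2\ge\cdots)$ with finitely many nonzero parts; $l(\lambda)$ = number of nonzero parts; Young diagram $[\lambda]=\{(i,j): i\ge1, 1\le j\le\lambda_i\}$ ($i$ = row, increasing downward). $\lambda'$ is the conjugate; self-conjugate means $\lambda=\lambda'$. $k(\lambda)=\max\{i:\lambda_i\ge i\}$; hook length $h_{ij}=\lambda_i+\lambda'_j-i-j+1$. A BG-partition is a self-conjugate partition with $p\nmid h_{ii}$ for all $1\le i\le k(\lambda)$. Rim and $p$-rim: the rim is the set of nodes $(i,j)\in[\lambda]$ with $(i+1,j+1)\notin[\lambda]$. Label rim nodes $1,2,\dots$ along the rim path from $(1,\lambda_1)$ to $(l(\lambda),1)$. The first $p$-segment is the rim nodes labelled $1,\dots,p$ (or all if fewer). If the last node $(i,j)$ of a $p$-segment lies in the last row, stop; otherwise with $l$ the smallest label in row $i+1$ the next $p$-segment is the rim nodes labelled $l,\dots,l+p-1$ (or up to the last). The $p$-rim is the union of the $p$-segments. $p$-rim*: $U_\lambda=\{(i,j)\in p\text{-rim of }\lambda: i\le j\}$, $L_\lambda=\{(j,i):(i,j)\in U_\lambda\}$, $\mathrm{Rim}^*_p(\lambda)=U_\lambda\cup L_\lambda$, $a^*_\lambda=\#\mathrm{Rim}^*_p(\lambda)$. *)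

From mathcomp Require Import all_boot.
Set Implicit Arguments. Unset Strict Implicit. Unset Printing Implicit Defensive.

Definition is_partition (s : seq nat) : bool :=
  sorted geq s && (0 \notin s).

(* lambda_i for i >= 1 (0 beyond the length). *)
Definition part (s : seq nat) (i : nat) : nat := nth 0 s i.-1.

Definition plen (s : seq nat) : nat := size s.

(* Young diagram membership; nodes (i,j) with i = row, j = column, 1-based. *)
Definition in_diag (s : seq nat) (x : nat * nat) : bool :=
  (1 <= x.1) && (1 <= x.2) && (x.2 <= part s x.1).

Definition conj_part (s : seq nat) (j : nat) : nat := count (fun x => j <= x) s.
Definition conjugate (s : seq nat) : seq nat :=
  [seq conj_part s j | j <- iota 1 (part s 1)].

Definition self_conjugate (s : seq nat) : bool := conjugate s == s.

Definition kdiag (s : seq nat) : nat :=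
  \max_(1 <= i < (plen s).+1 | i <= part s i) i.

Definition hook (s : seq nat) (i j : nat) : nat :=
  part s i + conj_part s j + 1 - i - j.

Definition BG_partition (p : nat) (s : seq nat) : bool :=
  self_conjugate s && [forall i : 'I_(kdiag s).+1, (1 <= i) ==> ~~ (p %| hook s i i)].

Definition diag_nodes (s : seq nat) : seq (nat * nat) :=
  [seq (i, j) | i <- iota 1 (plen s), j <- iota 1 (part s i)].

Definition in_rim (s : seq nat) (x : nat * nat) : bool :=
  in_diag s x && ~~ in_diag s (x.1.+1, x.2.+1).

(* order along the rim path from (1,lambda_1) to (l,1):
   rows top to bottom, within a row right to left *)
Definition rim_order (a b : nat * nat) : bool :=
  (a.1 < b.1) || ((a.1 == b.1) && (b.2 <= a.2)).

(* rim nodes in path order; label k (1-based) is item k-1 *)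
Definition rim_seq (s : seq nat) : seq (nat * nat) :=
  sort rim_order (filter (in_rim s) (diag_nodes s)).

(* p-segments, by 0-based positions in rim_seq; fuel-driven recursion *)
Fixpoint prim_aux (p : nat) (s : seq nat) (fuel start : nat) : seq nat :=
  let rs := rim_seq s in
  let n := size rs in
  match fuel with
  | 0 => [::]
  | f.+1 =>
    let stop := minn (start + p) n in
    let seg := iota start (stop - start) in
    let i := (nth (0, 0) rs stop.-1).1 in
    if plen s <= i then seg
    else seg ++ prim_aux p s f (index i.+1 (map fst rs))
  end.

Definition prim_positions (p : nat) (s : seq nat) : seq nat :=
  prim_aux p s (size (rim_seq s)).+1 0.

Definition p_rim (p : nat) (s : seq nat) : seq (nat * nat) :=
  [seq nth (0, 0) (rim_seq s) k | k <- prim_positions p s].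

Definition U_set (p : nat) (s : seq nat) : seq (nat * nat) :=
  [seq x <- p_rim p s | x.1 <= x.2].
Definition L_set (p : nat) (s : seq nat) : seq (nat * nat) :=
  [seq (x.2, x.1) | x <- U_set p s].

Definition rim_star (p : nat) (s : seq nat) : seq (nat * nat) :=
  undup (U_set p s ++ L_set p s).

Definition astar (p : nat) (s : seq nat) : nat := size (rim_star p s).

Example ex_rim : rim_seq [:: 3; 2; 1] = [:: (1,3); (1,2); (2,2); (2,1); (3,1)].
Proof. by []. Qed.
Example ex_prim : p_rim 3 [:: 3; 2; 1] = [:: (1,3); (1,2); (2,2); (3,1)].
Proof. by []. Qed.
Example ex_astar : astar 3 [:: 3; 2; 1] = 5.
Proof. by []. Qed.
Example ex_k : kdiag [:: 3;2;1] = 2.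
Proof. by rewrite /kdiag unlock. Qed.
Example ex_conj : self_conjugate [:: 3; 2; 1].
Proof. by []. Qed.
Example ex_hook : hook [:: 3; 2; 1] 1 1 = 5 /\ hook [:: 3; 2; 1] 2 2 = 1.
Proof. by []. Qed.

From mathcomp Require Import all_boot zify.
Set Implicit Arguments. Unset Strict Implicit. Unset Printing Implicit Defensive.

(* Number the rim nodes 0, ..., 2m along the rim path, where m = λ_1 - 1.  Since λ
   is self-conjugate, node q lies on the diagonal j - i = m - q, so U_λ consists of the
   p-rim nodes numbered at most m, and U_λ meets L_λ at most in the diagonal node m.
   Hence a*_λ = 2c - [m in the p-rim], where c counts the p-rim nodes numbered at most m.
   The p-segments are runs of p consecutive nodes, each starting at the last node
   (r, λ_r) of a row and cut short only by the end of the rim.  If m is not in the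
   p-rim, then c is a multiple of p and a*_λ = 2c.  Otherwise the segment containing m
   starts at the node numbered st, say (r, λ_r), and its diagonal gives
   λ_r - r = m - st >= 0; so c = λ_r - r + 1 (mod p), and a*_λ = 2c - 1 is odd and
   congruent to the diagonal hook h_rr = 2(λ_r - r) + 1 with r <= k(λ), which p does
   not divide. *)

Section Blocks.
Variables (p N : nat) (S : nat -> Prop).

(* Positions of successive p-segments: each starts at an [S]-position and is cut short
   only by the end [N] of the rim. *)
Inductive blocks : nat -> seq nat -> Prop :=
  | BlocksNil lo : blocks lo [::]
  | BlocksCons lo st rest : lo <= st < N -> S st ->
      blocks (minn (st + p) N) rest ->
      blocks lo (iota st (minn (st + p) N - st) ++ rest).

Lemma blocks_bounds lo out : blocks lo out -> all (fun q => lo <= q < N) out.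
Proof.
elim=> {lo out} // lo st rest lo_st _ _ /allP rest_ge.
rewrite all_cat; apply/andP; split; apply/allP => q.
  by rewrite mem_iota; lia.
by move/rest_ge; lia.
Qed.

Lemma blocks_uniq lo out : blocks lo out -> uniq out.
Proof.
elim=> {lo out} // lo st rest _ _ rest_blocks rest_uniq.
rewrite cat_uniq iota_uniq rest_uniq andbT /=; apply/hasPn => q.
by move/(allP (blocks_bounds rest_blocks)); rewrite mem_iota; lia.
Qed.

Variable m : nat.
Hypothesis m_lt : m < N.

Lemma count_iota_le a k : count (fun q => q <= m) (iota a k) = minn k (m.+1 - a).
Proof. by elim: k a => [|k IHk] a /=; [rewrite min0n | rewrite IHk; lia]. Qed.

Lemma count_blocks_gt lo out : blocks lo out -> m < lo -> count (fun q => q <= m) out = 0.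
Proof.
move=> /blocks_bounds /allP out_ge m_lo; apply/eqP; rewrite -leqn0 leqNgt -has_count.
by apply/hasPn => q /out_ge; lia.
Qed.

Lemma blocks_count_notin lo out : blocks lo out -> m \notin out ->
  p %| count (fun q => q <= m) out.
Proof.
elim=> {lo out} // lo st rest _ _ rest_blocks IHrest.
rewrite mem_cat mem_iota negb_or count_cat count_iota_le => /andP[m_seg m_rest].
have [m_stop | stop_m] := ltnP m (minn (st + p) N).
  by rewrite (count_blocks_gt rest_blocks m_stop) addn0; have -> : m.+1 - st = 0 by lia.
have -> : minn (minn (st + p) N - st) (m.+1 - st) = p by move: m_lt; lia.
by rewrite dvdn_addr ?IHrest.
Qed.

Lemma blocks_count_in lo out : blocks lo out -> m \in out ->
  exists st, [/\ S st, st <= m & count (fun q => q <= m) out = (m - st).+1 %[mod p]].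
Proof.
elim=> {lo out} // lo st rest _ S_st rest_blocks IHrest.
rewrite mem_cat mem_iota count_cat count_iota_le.
have [m_stop | stop_m] := ltnP m (minn (st + p) N).
  have m_rest : m \notin rest.
    by apply/negP => /(allP (blocks_bounds rest_blocks)); lia.
  rewrite (negbTE m_rest) orbF (count_blocks_gt rest_blocks m_stop) addn0 => m_seg.
  by exists st; split => //; [lia | congr (_ %% _); lia].
case/orP => [| /IHrest [st' [S_st' st'_m count_rest]]]; first by lia.
exists st'; split => //.
have -> : minn (minn (st + p) N - st) (m.+1 - st) = p by lia.
by rewrite modnDl.
Qed.

End Blocks.

Lemma rim_order_refl : reflexive rim_order.
Proof. by move=> x; rewrite /rim_order eqxx leqnn orbT. Qed.

Lemma rim_order_trans : transitive rim_order.
Proof.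
move=> [y1 y2] [x1 x2] [z1 z2]; rewrite /rim_order /=.
by case: (ltngtP x1 y1); case: (ltngtP y1 z1); rewrite ?orbF ?orbT ?andbF //=; lia.
Qed.

Lemma rim_order_total : total rim_order.
Proof.
by move=> [x1 x2] [y1 y2]; rewrite /rim_order /=; case: ltngtP => //= _; apply: leq_total.
Qed.

Lemma part_eq0 s i : size s < i -> part s i = 0.
Proof. by move=> s_i; rewrite /part nth_default //; lia. Qed.

Section Rim.
Variable s : seq nat.
Hypothesis s_part : is_partition s.

Lemma part_nonincr a b : 0 < a <= b -> part s b <= part s a.
Proof.
move=> a_b; have [b_s | s_b] := ltnP b.-1 (size s); last by rewrite /part nth_default.
have geq_trans : transitive geq by move=> y x z /= xy yz; apply: leq_trans yz xy.
apply: (sorted_leq_nth geq_trans leqnn 0 (andP s_part).1); rewrite ?inE; lia.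
Qed.

Lemma part_gt0 i : 0 < i <= size s -> 0 < part s i.
Proof.
move=> i_s; have i_lt : i.-1 < size s by lia.
by rewrite lt0n; apply: contraNneq (andP s_part).2 => <-; apply: mem_nth.
Qed.

Lemma in_diag_bounds x : in_diag s x -> 0 < x.1 <= size s /\ 0 < x.2 <= part s 1.
Proof.
case: x => i j; rewrite /in_diag /= => /andP[/andP[i_gt0 j_gt0] j_le].
have i_s : i <= size s by rewrite leqNgt; apply/negP => /part_eq0 p0; move: j_le; rewrite p0; lia.
by split; [lia | rewrite j_gt0; apply: leq_trans j_le (part_nonincr _); lia].
Qed.

Lemma mem_diag_nodes x : (x \in diag_nodes s) = in_diag s x.
Proof.
case: x => i j; apply/allpairsPdep/idP => [[i' [j' [+ + [-> ->]]]] | ij_diag].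
  by rewrite !mem_iota /in_diag /=; lia.
have [/= i_s _] := in_diag_bounds ij_diag.
by exists i, j; move: ij_diag; rewrite !mem_iota /in_diag /plen /= => ij_diag; split => //; lia.
Qed.

Lemma mem_rim_seq x : (x \in rim_seq s) = in_rim s x.
Proof.
by rewrite mem_sort mem_filter mem_diag_nodes /in_rim; case: in_diag; rewrite ?andbF ?andbT.
Qed.

Lemma rim_seq_uniq : uniq (rim_seq s).
Proof.
rewrite sort_uniq filter_uniq //; apply: allpairs_uniq_dep => [|i _|]; rewrite ?iota_uniq //.
by move=> [a1 a2] [b1 b2] _ _ /= [-> ->].
Qed.

Lemma rim_seq_sorted : sorted rim_order (rim_seq s).
Proof. exact: sort_sorted rim_order_total _. Qed.

Definition rim_size := part s 1 + size s - 1.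

(* The content j - i, shifted by l(λ) so as to stay in nat. *)
Definition rim_content (x : nat * nat) := x.2 + size s - x.1.

Lemma rim_content_lt x y : in_rim s x -> in_rim s y -> x != y -> rim_order x y ->
  rim_content y < rim_content x.
Proof.
move=> x_rim y_rim; have [+ _] := in_diag_bounds (andP x_rim).1.
have [+ _] := in_diag_bounds (andP y_rim).1.
move: x_rim y_rim; case: x => i j; case: y => i' j'.
rewrite /in_rim /in_diag /rim_order /rim_content /=.
move=> /andP[_ j_end] /andP[/andP[_ j'_le] _] i'_s i_s xy.
case/orP=> [i_i' | /andP[/eqP ii' j'_j]]; last by move: xy; rewrite ii' xpair_eqE eqxx /=; lia.
have : part s i' <= part s i.+1 by apply: part_nonincr; lia.
by move: j_end; rewrite -leqNgt; lia.
Qed.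

Lemma rim_content_inj : {in rim_seq s &, injective rim_content}.
Proof.
move=> x y; rewrite !mem_rim_seq => x_rim y_rim cxy.
apply/eqP/negPn/negP => xy; suff : rim_content x < rim_content x by rewrite ltnn.
have [xy_ord | yx_ord] := orP (rim_order_total x y).
  by rewrite {1}cxy (rim_content_lt x_rim y_rim).
by rewrite {2}cxy (rim_content_lt y_rim x_rim) // eq_sym.
Qed.

Lemma rim_content_exists c : 0 < c <= rim_size -> exists2 x, in_rim s x & rim_content x = c.
Proof.
move=> c_bounds.
pose P i := (0 < i) && (size s < i + c) && in_diag s (i, i + c - size s).
have exP : exists i, P i.
  have [s_c | c_s] := leqP (size s) c.
    by exists 1; rewrite /P /in_diag /=; move: c_bounds; rewrite /rim_size; lia.
  exists (size s - c).+1; have := part_gt0 (i := (size s - c).+1).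
  by rewrite /P /in_diag /=; lia.
have P_bounded i : P i -> i <= size s by case/andP=> _ /in_diag_bounds /= ; lia.
have [i /andP[/andP[i_gt0 s_ic] i_diag] i_max] := ex_maxnP exP P_bounded.
exists (i, i + c - size s); last by rewrite /rim_content /=; lia.
rewrite /in_rim i_diag /=; apply/negP => next_diag.
suff : i.+1 <= i by rewrite ltnn.
apply: i_max; rewrite /P; have -> : i.+1 + c - size s = (i + c - size s).+1 by lia.
by rewrite next_diag andbT; lia.
Qed.

Lemma map_rim_content : map rim_content (rim_seq s) = rev (iota 1 rim_size).
Proof.
rewrite -[LHS]revK; congr rev; apply: (irr_sorted_eq ltn_trans ltnn).
- rewrite ltn_sorted_uniq_leq rev_uniq (map_inj_in_uniq rim_content_inj) rim_seq_uniq.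
  rewrite rev_sorted sorted_map; apply: (sub_in_sorted _ (allss _) rim_seq_sorted).
  move=> x y; rewrite !mem_rim_seq => x_rim y_rim xy_ord /=.
  have [-> // | xy] := eqVneq x y.
  exact/ltnW/rim_content_lt.
- exact: iota_ltn_sorted.
move=> c; rewrite mem_rev mem_iota; apply/mapP/idP => [[x + ->] | c_bounds].
  rewrite mem_rim_seq => /andP[/in_diag_bounds [x1_s x2_le] _].
  by move: x1_s x2_le; rewrite /rim_content /rim_size; lia.
have [x x_rim <-] := rim_content_exists (c := c) ltac:(lia).
by exists x; rewrite ?mem_rim_seq.
Qed.

Lemma size_rim_seq : size (rim_seq s) = rim_size.
Proof. by rewrite -(size_map rim_content) map_rim_content size_rev size_iota. Qed.

Lemma rim_content_nth q : q < rim_size -> rim_content (nth (0, 0) (rim_seq s) q) = rim_size - q.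
Proof.
move=> q_lt; rewrite -(nth_map _ 0) ?size_rim_seq // map_rim_content nth_rev ?size_iota //.
by rewrite nth_iota; lia.
Qed.

Lemma in_rim_nth q : q < rim_size -> in_rim s (nth (0, 0) (rim_seq s) q).
Proof. by move=> q_lt; rewrite -mem_rim_seq mem_nth // size_rim_seq. Qed.

Lemma rim_nth_order q q' : q <= q' < rim_size ->
  rim_order (nth (0, 0) (rim_seq s) q) (nth (0, 0) (rim_seq s) q').
Proof.
move=> q_q'; apply: (sorted_leq_nth rim_order_trans rim_order_refl _ rim_seq_sorted);
  rewrite ?inE ?size_rim_seq; lia.
Qed.

Lemma in_rim_row_end r : 0 < r <= size s -> in_rim s (r, part s r).
Proof.
move=> r_s; have := part_gt0 r_s; have : part s r.+1 <= part s r by apply: part_nonincr; lia.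
by rewrite /in_rim /in_diag /= -ltnNge; lia.
Qed.

Definition row_start r := index r (map fst (rim_seq s)).

Lemma nth_row_start r : 0 < r <= size s ->
  row_start r < rim_size /\ nth (0, 0) (rim_seq s) (row_start r) = (r, part s r).
Proof.
move=> r_s; have end_rs : (r, part s r) \in rim_seq s by rewrite mem_rim_seq in_rim_row_end.
set idx := index (r, part s r) (rim_seq s).
have idx_lt : idx < rim_size by rewrite -size_rim_seq index_mem.
have st_idx : row_start r <= idx.
  have := @index_nth _ 0 idx (map fst (rim_seq s)).
  by rewrite size_map size_rim_seq (nth_map (0, 0)) ?size_rim_seq // nth_index //; apply.
have st_lt : row_start r < rim_size by lia.
split => //; have : (nth (0, 0) (rim_seq s) (row_start r)).1 = r.
  rewrite -(nth_map _ 0) ?size_rim_seq // nth_index //.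
  by apply/mapP; exists (r, part s r).
have := rim_nth_order (q := row_start r) (q' := idx) ltac:(lia); rewrite nth_index //.
have := in_rim_nth st_lt; case: nth => i j /= /andP[/andP[_ j_le] _] + i_r.
move: j_le; rewrite /rim_order i_r ltnn eqxx /= => j_le end_j; congr pair; lia.
Qed.

Definition is_row_start st :=
  exists2 r, 0 < r <= size s & nth (0, 0) (rim_seq s) st = (r, part s r).

Lemma prim_aux_blocks p f st lo : is_row_start st -> lo <= st < rim_size ->
  blocks p rim_size is_row_start lo (prim_aux p s f st).
Proof.
elim: f st lo => [|f IHf] st lo st_row lo_st /=; first exact: BlocksNil.
rewrite size_rim_seq; set stop := minn _ _; set i := (nth _ _ stop.-1).1.
have seg_blocks rest : blocks p rim_size is_row_start stop rest ->
    blocks p rim_size is_row_start lo (iota st (stop - st) ++ rest).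
  exact: BlocksCons.
case: ifP => [_ | /negbT i_s]; first by rewrite -[iota _ _]cats0; apply/seg_blocks/BlocksNil.
have i_s' : 0 < i.+1 <= size s by rewrite /plen -ltnNge in i_s; lia.
have [next_lt next_end] := nth_row_start i_s'.
apply/seg_blocks/IHf; first by exists i.+1.
rewrite -/(row_start i.+1) next_lt andbT leqNgt; apply/negP => next_stop.
have stop_le : stop <= rim_size := geq_minr _ _.
have := rim_nth_order (q := row_start i.+1) (q' := stop.-1) ltac:(lia).
by rewrite next_end /rim_order /= -/i => /orP[|/andP[/eqP]]; lia.
Qed.

Lemma rim_seq_head : 0 < size s -> nth (0, 0) (rim_seq s) 0 = (1, part s 1).
Proof.
move=> s_gt0; have size_gt0 : 0 < rim_size.
  by have := part_gt0 (i := 1); rewrite /rim_size; lia.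
have := rim_content_nth size_gt0.
have [/= + +] := in_diag_bounds (andP (in_rim_nth size_gt0)).1.
by case: nth => i j; rewrite /rim_content /rim_size /= => i_s j_le ij; congr pair; lia.
Qed.

Lemma prim_positions_blocks p : 0 < size s ->
  blocks p rim_size is_row_start 0 (prim_positions p s).
Proof.
move=> s_gt0; apply: prim_aux_blocks; first by exists 1; [lia | apply: rim_seq_head].
by have := part_gt0 (i := 1); rewrite /rim_size; lia.
Qed.

End Rim.

Lemma size_undup_transpose (A : seq (nat * nat)) :
  uniq A -> all (fun x => x.1 <= x.2) A ->
  size (undup (A ++ [seq (x.2, x.1) | x <- A])) = (size A).*2 - count (fun x => x.1 == x.2) A.
Proof.
move=> A_uniq /allP A_upper; set B := [seq _ | x <- A].
have B_uniq : uniq B by rewrite map_inj_uniq // => [[a b] [c d]] [-> ->].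
rewrite undup_cat (undup_id A_uniq) (undup_id B_uniq) size_cat size_filter size_map.
have -> : count (fun x => x \notin B) A = count (predC (fun x => x.1 == x.2)) A.
  apply: eq_in_count => x x_A /=; congr negb; apply/mapP/eqP => [[y y_A x_y] | x_diag].
    by have := A_upper _ x_A; have := A_upper _ y_A; rewrite x_y /=; lia.
  by exists x => //; case: x x_diag {x_A} => a b /= ->.
by rewrite -(count_predC (fun x => x.1 == x.2) A); lia.
Qed.

Lemma conj_part_self_conjugate s r : self_conjugate s -> 0 < r <= part s 1 ->
  conj_part s r = part s r.
Proof.
move=> /eqP s_sc r_le; rewrite /part -[in RHS]s_sc /conjugate (nth_map 0) ?size_iota; last by lia.
by rewrite nth_iota; [congr conj_part | ]; lia.
Qed.

Lemma size_self_conjugate s : self_conjugate s -> size s = part s 1.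
Proof. by move=> /eqP s_sc; rewrite -[in LHS]s_sc size_map size_iota. Qed.

Lemma leq_kdiag s r : 0 < r <= part s r -> r <= kdiag s.
Proof.
move=> r_diag; apply: (@leq_bigmax_seq _ _ _ (fun i => i) r); last by lia.
rewrite mem_index_iota /plen ltnS andbC; apply/andP; split; last by lia.
by rewrite leqNgt; apply/negP => /part_eq0 r_big; move: r_diag; rewrite r_big; lia.
Qed.

Lemma BG_partition_ndvd_hook p s r : is_partition s -> BG_partition p s ->
  0 < r <= part s r -> ~~ (p %| (part s r - r).*2.+1).
Proof.
move=> s_part /andP[s_sc /forallP s_BG] r_diag.
have r_k : r < (kdiag s).+1 by rewrite ltnS leq_kdiag.
have r_part1 : 0 < r <= part s 1.
  by have := part_nonincr s_part (a := 1) (b := r); lia.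
have := s_BG (Ordinal r_k).
rewrite /= (andP r_diag).1 /hook (conj_part_self_conjugate s_sc r_part1).
by have -> : part s r + part s r + 1 - r - r = (part s r - r).*2.+1 by lia.
Qed.

Section SelfConjugate.
Variables (p : nat) (s : seq nat).
Hypotheses (s_part : is_partition s) (s_sc : self_conjugate s) (s_nil : s != [::]).

Let m := (part s 1).-1.
Let pos := prim_positions p s.

Let s_gt0 : 0 < size s. Proof. by case: (s) s_nil. Qed.

Let part1_gt0 : 0 < part s 1. Proof. by apply: part_gt0; lia. Qed.

Lemma rim_size_self_conjugate : rim_size s = m.*2.+1.
Proof. by rewrite /rim_size /m size_self_conjugate //; lia. Qed.

Lemma rim_nth_diag_offset q : q < rim_size s ->
  (nth (0, 0) (rim_seq s) q).2 + q = m + (nth (0, 0) (rim_seq s) q).1.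
Proof.
move=> q_lt; have := rim_content_nth s_part q_lt.
have [+ _] := in_diag_bounds s_part (andP (in_rim_nth s_part q_lt)).1.
move: q_lt; rewrite /rim_content rim_size_self_conjugate size_self_conjugate // /m.
by case: nth => i j /=; lia.
Qed.

Lemma prim_positions_lt q : q \in pos -> q < rim_size s.
Proof. by move/(allP (blocks_bounds (prim_positions_blocks s_part p s_gt0))); lia. Qed.

Lemma U_set_prim : U_set p s = [seq nth (0, 0) (rim_seq s) q | q <- pos & q <= m].
Proof.
rewrite /U_set /p_rim filter_map; congr map; apply: eq_in_filter => q /prim_positions_lt q_lt /=.
by have := rim_nth_diag_offset q_lt; lia.
Qed.

Lemma astar_count : astar p s = (count (fun q => q <= m) pos).*2 - (m \in pos).
Proof.
have pos_uniq : uniq pos := blocks_uniq (prim_positions_blocks s_part p s_gt0).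
have nth_inj : {in [seq q <- pos | q <= m] &, injective (nth (0, 0) (rim_seq s))}.
  move=> q q'; rewrite !mem_filter => /andP[_ /prim_positions_lt q_lt].
  move=> /andP[_ /prim_positions_lt q'_lt].
  by move/eqP; rewrite nth_uniq ?size_rim_seq ?rim_seq_uniq // => /eqP.
rewrite /astar /rim_star /L_set U_set_prim size_undup_transpose.
- rewrite size_map size_filter count_map -(count_uniq_mem _ pos_uniq) count_filter.
  congr (_ - _); apply: eq_in_count => q /prim_positions_lt q_lt /=.
  by have := rim_nth_diag_offset q_lt; case: nth => i j /=; lia.
- by rewrite (map_inj_in_uniq nth_inj) filter_uniq.
apply/allP => x /mapP[q]; rewrite mem_filter => /andP[q_m /prim_positions_lt q_lt] ->.
by have := rim_nth_diag_offset q_lt; lia.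
Qed.

Let m_lt : m < rim_size s. Proof. by rewrite rim_size_self_conjugate; lia. Qed.

Let pos_blocks := prim_positions_blocks s_part p s_gt0.

Lemma astar_even_dvdn : m \notin pos -> ~~ odd (astar p s) /\ p %| astar p s.
Proof.
move=> m_pos; rewrite astar_count (negbTE m_pos) subn0 odd_double -muln2.
by rewrite dvdn_mulr // (blocks_count_notin m_lt pos_blocks m_pos).
Qed.

Lemma astar_odd_ndvdn : BG_partition p s -> m \in pos -> odd (astar p s) /\ ~~ (p %| astar p s).
Proof.
move=> s_BG m_pos.
have [st [[r r_s st_end] st_m count_st]] := blocks_count_in m_lt pos_blocks m_pos.
have c_gt0 : 0 < count (fun q => q <= m) pos by rewrite -has_count; apply/hasP; exists m.
have astar_succ : (astar p s).+1 = count (fun q => q <= m) pos * 2.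
  by rewrite astar_count m_pos; lia.
have [r_part r_diag] : part s r - r = m - st /\ r <= part s r.
  by have := rim_nth_diag_offset (q := st) ltac:(lia); rewrite st_end /=; lia.
have astar_hook : astar p s = (part s r - r).*2.+1 %[mod p].
  apply/eqP; rewrite -(eqn_modDr 1) !addn1 astar_succ.
  have -> : (part s r - r).*2.+2 = (m - st).+1 * 2 by lia.
  by rewrite -modnMml count_st modnMml.
split; first by rewrite -[odd _]negbK -oddS astar_succ oddM andbF.
by rewrite /dvdn astar_hook; apply: BG_partition_ndvd_hook s_part s_BG _; lia.
Qed.

End SelfConjugate.

Theorem lemma3p20 (p : nat) (s : seq nat) :
  prime p -> odd p -> is_partition s -> s != [::] -> BG_partition p s ->
  (~~ odd (astar p s) <-> p %| astar p s).
Proof.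
move=> _ _ s_part s_nil s_BG; have s_sc := (andP s_BG).1.
have [m_pos | m_pos] := boolP ((part s 1).-1 \in prim_positions p s).
  by have [-> /negbTE ->] := astar_odd_ndvdn s_part s_sc s_nil s_BG m_pos.
by have [-> ->] := astar_even_dvdn s_part s_sc s_nil m_pos.
Qed.
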